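(* Let $p\ge1$, $k\ge1$, $r\in\{1,\dots,p-1\}$, $q=p-r$. Let $c\in\mathbb R^p$ and $\Phi_0,\dots,\Phi_k\in\mathbb R^{p\times p}$, with $\Phi(\lambda)=\Phi_0-\sum_{i=1}^k\Phi_i\lambda^i$, satisfy: $\Phi_0$ is invertible; $c\in\operatorname{span}\Phi(1)$ and $\operatorname{rank}\Phi(1)=r$; and $\Phi(\lambda)$ has $q$ roots at unity and all others outside the unit circle. Let $\alpha,\beta\in\mathbb R^{p\times r}$ have full column rank with $\alpha\beta^\top=-\Phi(1)$, let $\Gamma_j=-\sum_{i=j+1}^k\Phi_i$, $H=\Phi_0-\sum_{i=1}^{k-1}\Gamma_i$, and $\chi(z)=\begin{bmatrix}\alpha_\perp^\top H\\\beta^\top\end{bmatrix}z$. Then $\chi$ is invertible and for $y=(y_{(1)}^\top,y_{(2)}^\top)^\top\in\mathbb R^q\times\mathbb R^r$, $$\chi^{-1}(y)=\beta_\perp(\alpha_\perp^\top H\beta_\perp)^{-1}y_{(1)}+\{I-\beta_\perp(\alpha_\perp^\top H\beta_\perp)^{-1}\alpha_\perp^\top H\}\beta(\beta^\top\beta)^{-1}y_{(2)}.$$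
   Context: Roots of $\Phi(\lambda)$ are roots of $\det\Phi(\lambda)$. For a $p\times r$ matrix $a$ of rank $r$, $a_\perp$ denotes a $p\times(p-r)$ matrix of rank $p-r$ with $a_\perp^\top a=0$. *)

From HB Require Import structures.
From mathcomp Require Import all_boot all_order all_algebra.
From mathcomp Require Import complex.
Set Implicit Arguments. Unset Strict Implicit. Unset Printing Implicit Defensive.
Import Order.TTheory GRing.Theory Num.Theory.
Local Open Scope ring_scope.

Definition Phi_at1 (R : pzRingType) (p k : nat) (Phi : nat -> 'M[R]_p) : 'M[R]_p :=
  Phi 0%N - \sum_(1 <= i < k.+1) Phi i.

Definition Phi_poly (R : nzRingType) (p k : nat) (Phi : nat -> 'M[R]_p)
  : 'M[{poly R}]_p :=
  map_mx polyC (Phi 0%N) - \sum_(1 <= i < k.+1) ('X^i *: map_mx polyC (Phi i)).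

(* det Phi(lambda) as a scalar polynomial; the roots of Phi are its roots. *)
Definition Phi_det (R : comNzRingType) (p k : nat) (Phi : nat -> 'M[R]_p)
  : {poly R} := \det (Phi_poly k Phi).

Definition Gamma (R : pzRingType) (p k : nat) (Phi : nat -> 'M[R]_p) (j : nat)
  : 'M[R]_p := - \sum_(j.+1 <= i < k.+1) Phi i.

Definition Hmat (R : pzRingType) (p k : nat) (Phi : nat -> 'M[R]_p) : 'M[R]_p :=
  Phi 0%N - \sum_(1 <= i < k) Gamma k Phi i.

Definition is_perp (R : fieldType) (p r : nat) (a : 'M[R]_(p, r))
  (ap : 'M[R]_(p, p - r)) : Prop :=
  \rank ap = (p - r)%N /\ ap^T *m a = 0.

From HB Require Import structures.
From mathcomp Require Import all_boot all_order all_algebra.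
From mathcomp Require Import complex.
Import Order.TTheory GRing.Theory Num.Theory.
Local Open Scope ring_scope.
Set Implicit Arguments. Unset Strict Implicit. Unset Printing Implicit Defensive.

(* Write Phi(x) = Phi(1) + (x - 1) Psi(x); then Psi(1) = Phi(1) - H.  If
   M = alpha_perp^T H beta_perp were singular, pick w <> 0 with w M = 0 and put
   z = w alpha_perp^T, so that z Phi(1) = 0 and z Psi(1) beta_perp = 0.  As
   Phi(x) beta_perp = (x - 1) Psi(x) beta_perp, multiplying by the invertible
   [beta_perp beta] gives
     det Phi(x) det [beta_perp beta] = (x - 1)^q det [Psi(x) beta_perp  Phi(x) beta],
   and z annihilates the last matrix at x = 1: the root 1 of det Phi would have
   multiplicity > q.  Once M is invertible, the displayed block matrix is a
   right inverse of the square matrix chi, hence its inverse. *)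

Lemma tr_mulmx_eq0C (F : comNzRingType) m n p (A : 'M[F]_(m, n)) (B : 'M[F]_(m, p)) :
  A^T *m B = 0 -> B^T *m A = 0.
Proof. by move=> AB; rewrite -[LHS]trmxK trmx_mul trmxK AB trmx0. Qed.

Section OrderedLinearAlgebra.
Variable R : realFieldType.

Lemma mulmx_tr_eq0 n (u : 'rV[R]_n) : u *m u^T = 0 -> u = 0.
Proof.
move=> /matrixP /(_ 0 0); rewrite !mxE => sum_sq0.
apply/rowP => j; rewrite mxE.
have /(_ j isT) : forall i, true -> u 0 i * u^T i 0 = 0.
  by apply: psumr_eq0P sum_sq0 => i _; rewrite mxE -expr2 sqr_ge0.
by rewrite mxE => /eqP; rewrite mulf_eq0 orbb => /eqP.
Qed.

Lemma gram_unitmx m n (A : 'M[R]_(m, n)) : \rank A = n -> A^T *m A \in unitmx.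
Proof.
move=> rankA; rewrite unitmxE unitfE; apply/det0P => -[v v0 vAA].
have freeAT : row_free A^T by rewrite /row_free mxrank_tr rankA.
move/eqP: v0; apply; apply/eqP; rewrite -(mulmx_free_eq0 _ freeAT); apply/eqP.
by apply: mulmx_tr_eq0; rewrite trmx_mul trmxK mulmxA -(mulmxA v) vAA mul0mx.
Qed.

Lemma row_mx_perp_unitmx n r (a : 'M[R]_(n + r, r)) (a_perp : 'M[R]_(n + r, n)) :
  \rank a_perp = n -> \rank a = r -> a_perp^T *m a = 0 ->
  row_mx a_perp a \in unitmx.
Proof.
move=> rank_ap rank_a ap_a.
have gram : (row_mx a_perp a)^T *m row_mx a_perp a
    = block_mx (a_perp^T *m a_perp) 0 0 (a^T *m a).
  by rewrite tr_row_mx mul_col_row ap_a (tr_mulmx_eq0C ap_a).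
have : (row_mx a_perp a)^T *m row_mx a_perp a \in unitmx.
  by rewrite gram unitmxE det_ublock unitrM -!unitmxE !gram_unitmx.
by rewrite unitmx_mul => /andP[].
Qed.

End OrderedLinearAlgebra.

Lemma sum_tails (V : nmodType) (F : nat -> V) m :
  \sum_(0 <= i < m) \sum_(i.+1 <= j < m.+1) F j = \sum_(0 <= j < m.+1) F j *+ j.
Proof.
elim: m => [|m IH]; first by rewrite big_geq // big_nat1 mulr0n.
rewrite big_nat_recr //= big_nat1.
rewrite (eq_big_nat _ _ (F2 := fun i => \sum_(i.+1 <= j < m.+1) F j + F m.+1)).
  by rewrite big_split /= IH sumr_const_nat subn0 -addrA -mulrSr [RHS]big_nat_recr.
by move=> i /andP[_ /ltnW im]; rewrite big_nat_recr.
Qed.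

Section VARPolynomial.
Variables (R : comNzRingType) (p k : nat) (Phi : nat -> 'M[R]_p).

Lemma Phi_at1_subHmat :
  Phi_at1 k Phi - Hmat k Phi = - \sum_(1 <= i < k.+1) Phi i *+ i.
Proof.
have [-> | k_gt0] := posnP k; first by rewrite /Phi_at1 /Hmat !big_geq // subrr oppr0.
have := sum_tails Phi k.
rewrite big_ltn // [in RHS]big_ltn // mulr0n add0r => <-.
by rewrite /Phi_at1 /Hmat /Gamma sumrN opprK !opprD addrACA subrr add0r.
Qed.

Definition Psi_poly : 'M[{poly R}]_p :=
  - \sum_(1 <= i < k.+1) (\sum_(j < i) 'X^j) *: map_mx polyC (Phi i).

Lemma Phi_polyE :
  Phi_poly k Phi = map_mx polyC (Phi_at1 k Phi) + ('X - 1) *: Psi_poly.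
Proof.
rewrite /Phi_poly /Phi_at1 /Psi_poly map_mxB map_mx_sum scalerN scaler_sumr.
under [X in _ = _ - X]eq_bigr => i _ do rewrite scalerA -subrX1.
rewrite -addrA -opprD -big_split /=; congr (_ - _); apply: eq_bigr => i _.
by rewrite scalerBl scale1r addrC subrK.
Qed.

Lemma map_mx_horner_polyC m n (x : R) (A : 'M[R]_(m, n)) :
  map_mx (horner_eval x) (map_mx polyC A) = A.
Proof. by apply/matrixP => i j; rewrite !mxE /horner_eval hornerC. Qed.

Lemma Psi_poly_at1 : map_mx (horner_eval 1) Psi_poly = Phi_at1 k Phi - Hmat k Phi.
Proof.
rewrite Phi_at1_subHmat /Psi_poly map_mxN map_mx_sum; congr (- _).
apply: eq_bigr => i _; rewrite map_mxZ map_mx_horner_polyC /= /horner_eval horner_sum.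
under eq_bigr => j _ do rewrite hornerXn expr1n.
by rewrite sumr_const card_ord scaler_nat.
Qed.

Lemma Phi_det_at0 : (Phi_det k Phi).[0] = \det (Phi 0%N).
Proof.
rewrite -horner_evalE -det_map_mx /Phi_poly map_mxB map_mx_horner_polyC map_mx_sum.
rewrite big_nat_cond big1 ?subr0 // => i /andP[/andP[i_gt0 _] _].
rewrite map_mxZ map_mx_horner_polyC /= /horner_eval hornerXn expr0n.
by rewrite eqn0Ngt i_gt0 scale0r.
Qed.

End VARPolynomial.

Lemma XsubC_expS_dvd_det (F : fieldType) n r (x : F) (A : 'M[F]_(n + r))
    (Q : 'M[{poly F}]_(n + r)) (U : 'M[F]_(n + r, n)) (V : 'M[F]_(n + r, r))
    (z : 'rV[F]_(n + r)) :
  row_mx U V \in unitmx -> A *m U = 0 ->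
  z != 0 -> z *m A = 0 -> z *m map_mx (horner_eval x) Q *m U = 0 ->
  ('X - x%:P) ^+ n.+1 %| \det (map_mx polyC A + ('X - x%:P) *: Q).
Proof.
move=> UV_unit AU z0 zA zQU.
set P := map_mx polyC A + _.
have PU : P *m map_mx polyC U = ('X - x%:P) *: (Q *m map_mx polyC U).
  by rewrite mulmxDl -map_mxM AU map_mx0 add0r scalemxAl.
have Px : map_mx (horner_eval x) P = A.
  rewrite map_mxD map_mxZ map_mx_horner_polyC /= /horner_eval.
  by rewrite hornerD hornerN hornerX hornerC subrr scale0r addr0.
set W := row_mx (Q *m map_mx polyC U) (P *m map_mx polyC V).
have detPUV : \det P * (\det (row_mx U V))%:P = ('X - x%:P) ^+ n * \det W.
  rewrite -det_map_mx -det_mulmx map_row_mx mul_mx_row PU.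
  have -> : row_mx (('X - x%:P) *: (Q *m map_mx polyC U)) (P *m map_mx polyC V)
      = W *m block_mx ('X - x%:P)%:M 0 0 1%:M.
    by rewrite mul_row_block !mulmx0 mul_mx_scalar mulmx1 addr0 add0r.
  by rewrite det_mulmx det_ublock det_scalar det1 mulr1 mulrC.
have W_root : root (\det W) x.
  rewrite rootE -horner_evalE -det_map_mx map_row_mx !map_mxM Px.
  rewrite !map_mx_horner_polyC; apply/det0P; exists z => //.
  by rewrite mul_mx_row !mulmxA zQU zA mul0mx row_mx0.
have : ('X - x%:P) ^+ n.+1 %| \det P * (\det (row_mx U V))%:P.
  by rewrite detPUV exprSr dvdp_mul // dvdp_XsubCl.
by rewrite mulrC mul_polyC dvdpZr // -unitfE -unitmxE.
Qed.

Lemma Hmat_perp_unitmx (R : realFieldType) p n r k (Phi : nat -> 'M[R]_p)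
    (alpha beta : 'M[R]_(p, r)) (alpha_perp beta_perp : 'M[R]_(p, n)) :
  (n + r)%N = p -> Phi 0%N \in unitmx -> mup 1 (Phi_det k Phi) = n ->
  \rank beta = r -> alpha *m beta^T = - Phi_at1 k Phi ->
  \rank alpha_perp = n -> alpha_perp^T *m alpha = 0 ->
  \rank beta_perp = n -> beta_perp^T *m beta = 0 ->
  alpha_perp^T *m Hmat k Phi *m beta_perp \in unitmx.
Proof.
move=> dim_p; subst p; move=> Phi0_unit mup1 rank_b ab rank_ap ap_a rank_bp bp_b.
rewrite unitmxE unitfE; apply/det0P => -[w w0 wM].
set z := w *m alpha_perp^T.
have z0 : z != 0 by rewrite mulmx_free_eq0 // /row_free mxrank_tr rank_ap.
have zPhi1 : z *m Phi_at1 k Phi = 0.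
  rewrite -[Phi_at1 _ _]opprK -ab mulmxN /z -mulmxA (mulmxA _ alpha) ap_a.
  by rewrite mul0mx mulmx0 oppr0.
have Phi1_bp : Phi_at1 k Phi *m beta_perp = 0.
  by rewrite -[Phi_at1 _ _]opprK -ab mulNmx -mulmxA (tr_mulmx_eq0C bp_b) mulmx0 oppr0.
have zPsi_bp : z *m map_mx (horner_eval 1) (Psi_poly k Phi) *m beta_perp = 0.
  rewrite Psi_poly_at1 mulmxBr zPhi1 sub0r mulNmx.
  by move: wM; rewrite /z !mulmxA => ->; rewrite oppr0.
have Phi_det0 : Phi_det k Phi != 0.
  apply: contraTneq Phi0_unit => det0.
  by rewrite unitmxE -(Phi_det_at0 k) det0 horner0 unitr0.
have bp_b_unit := row_mx_perp_unitmx rank_bp rank_b bp_b.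
have := XsubC_expS_dvd_det bp_b_unit Phi1_bp z0 zPhi1 zPsi_bp.
by rewrite polyC1 -Phi_polyE -/(Phi_det k Phi) -mup_geq // mup1 ltnn.
Qed.

Lemma mul_col_mx_rinv (F : comUnitRingType) m n p (C : 'M[F]_(m, p))
    (D : 'M[F]_(n, p)) (U : 'M[F]_(p, m)) (V : 'M[F]_(p, n)) :
  C *m U \in unitmx -> D *m V \in unitmx -> D *m U = 0 ->
  col_mx C D *m row_mx (U *m invmx (C *m U))
    ((1%:M - U *m invmx (C *m U) *m C) *m V *m invmx (D *m V)) = 1%:M.
Proof.
move=> CU_unit DV_unit DU.
rewrite mul_col_row [RHS](scalar_mx_block m n); congr block_mx.
- by rewrite mulmxA mulmxV.
- by rewrite !mulmxA mulmxBr mulmx1 !mulmxA mulmxV // mul1mx subrr !mul0mx.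
- by rewrite mulmxA DU mul0mx.
- by rewrite !mulmxA mulmxBr mulmx1 !mulmxA DU !mul0mx subr0 mulmxV.
Qed.

Lemma mulmx1C_rect (F : comUnitRingType) m n (A : 'M[F]_(m, n)) (B : 'M[F]_(n, m)) :
  m = n -> A *m B = 1%:M -> B *m A = 1%:M.
Proof. by move=> emn; subst m; apply: mulmx1C. Qed.

Theorem lemmaE1 (R : rcfType) (p k r : nat)
  (hk : (1 <= k)%N) (hr1 : (1 <= r)%N) (hrp : (r < p)%N)
  (c : 'cV[R]_p) (Phi : nat -> 'M[R]_p)
  (hPhi0 : Phi 0%N \in unitmx)
  (hc : exists v : 'cV[R]_p, c = Phi_at1 k Phi *m v)
  (hrank : \rank (Phi_at1 k Phi) = r)
  (hunit : mup 1 (Phi_det k Phi) = (p - r)%N)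
  (hout : forall z : R[i],
      root (map_poly (real_complex R) (Phi_det k Phi)) z ->
      z = 1 \/ 1 < `|z|)
  (alpha beta : 'M[R]_(p, r))
  (halpha : \rank alpha = r) (hbeta : \rank beta = r)
  (hab : alpha *m beta^T = - Phi_at1 k Phi)
  (alpha_perp beta_perp : 'M[R]_(p, p - r))
  (hap : is_perp alpha alpha_perp) (hbp : is_perp beta beta_perp) :
  let H := Hmat k Phi in
  let chi : 'M[R]_(p - r + r, p) := col_mx (alpha_perp^T *m H) beta^T in
  let M := alpha_perp^T *m H *m beta_perp in
  M \in unitmx /\
  exists chi_inv : 'cV[R]_(p - r + r) -> 'cV[R]_p,
    cancel (fun x => chi *m x) chi_inv /\
    cancel chi_inv (fun x => chi *m x) /\
    forall (y1 : 'cV[R]_(p - r)) (y2 : 'cV[R]_r),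
      chi_inv (col_mx y1 y2) =
        beta_perp *m invmx M *m y1
        + (1%:M - beta_perp *m invmx M *m alpha_perp^T *m H)
            *m beta *m invmx (beta^T *m beta) *m y2.
Proof.
move=> H chi M.
case: hap hbp => [rank_ap ap_a] [rank_bp bp_b].
have dim_p : (p - r + r)%N = p by rewrite subnK // ltnW.
have M_unit : M \in unitmx.
  exact: Hmat_perp_unitmx dim_p hPhi0 hunit hbeta hab rank_ap ap_a rank_bp bp_b.
have chiX := mul_col_mx_rinv M_unit (gram_unitmx hbeta) (tr_mulmx_eq0C bp_b).
set X := row_mx _ _ in chiX.
have Xchi := mulmx1C_rect dim_p chiX.
split=> //; exists (mulmx X); split; [|split].
- by move=> x; rewrite mulmxA Xchi mul1mx.
- by move=> y; rewrite mulmxA chiX mul1mx.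
- by move=> y1 y2; rewrite mul_row_col !mulmxA.
Qed.
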